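(* For any positive integers $a,b,n$, in $\mathfrak{h}^1_t$, $$\sum_{m=1}^nd_m(t)\,z_{b+(m-1)a}\ast_t z_a^{n-m}=\sum_{m=0}^{n-1}z_a^mz_bz_a^{n-1-m}.$$
   Context: $d_m(t)=t^m-(t-1)^m$. $\mathfrak{h}_t=\mathbb{Q}[t]\langle x,y\rangle$ ($1$ = empty word), $\mathfrak{h}^1_t=\mathbb{Q}[t]+\mathfrak{h}_ty$, $z_k=x^{k-1}y$, and $z_a^j$ is the concatenation power. For a word $w$, $\delta(w)=1$ if $w=1$, else $0$. The $t$-harmonic product $\ast_t$ on $\mathfrak{h}^1_t$ is the $\mathbb{Q}[t]$-bilinear product with $1\ast_t w=w\ast_t1=w$ and, for words $w_1,w_2\in\mathfrak{h}^1_t$ and $k,l\ge1$, $z_kw_1\ast_t z_lw_2=z_k(w_1\ast_t z_lw_2)+z_l(z_kw_1\ast_t w_2)+(1-2t)z_{k+l}(w_1\ast_t w_2)+[1-\delta(w_1)\delta(w_2)](t^2-t)x^{k+l}(w_1\ast_t w_2)$. *)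

From mathcomp Require Import all_boot all_order all_algebra.
Set Implicit Arguments. Unset Strict Implicit. Unset Printing Implicit Defensive.
Import Order.TTheory GRing.Theory Num.Theory.
Local Open Scope ring_scope.

(* Words over the alphabet {x, y}: x = false, y = true.
   An element of h_t = Q[t]<x,y> is represented by its coefficient function
   (word -> Q[t]); we only ever build finitely supported ones. *)
Definition word := seq bool.
Definition hpoly := word -> {poly rat}.

Definition zk (k : nat) : word := rcons (nseq k.-1 false) true.

Definition zword (s : seq nat) : word := flatten (map zk s).

Definition wind (u : word) : hpoly := fun w => if w == u then 1 else 0.

Definition lmul (u : word) (f : hpoly) : hpoly :=
  fun w => if take (size u) w == u then f (drop (size u) w) else 0.

Definition dpoly (m : nat) : {poly rat} := 'X ^+ m - ('X - 1) ^+ m.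

(* t-harmonic product of the h^1 words z_{s1} and z_{s2} (given by their
   index sequences, all indices >= 1), with fuel. *)
Fixpoint hprod_fuel (fuel : nat) (s1 s2 : seq nat) : hpoly :=
  match fuel with
  | 0 => fun _ => 0
  | f.+1 =>
    match s1, s2 with
    | [::], _ => wind (zword s2)
    | _, [::] => wind (zword s1)
    | k :: w1, l :: w2 => fun w =>
        lmul (zk k) (hprod_fuel f w1 s2) w
      + lmul (zk l) (hprod_fuel f s1 w2) w
      + (1 - 2%:R *: 'X) * lmul (zk (k + l)) (hprod_fuel f w1 w2) w
      + (if (w1 == [::]) && (w2 == [::]) then 0 else 'X ^+ 2 - 'X)
          * lmul (nseq (k + l) false) (hprod_fuel f w1 w2) w
    end
  end.

Definition hprod (s1 s2 : seq nat) : hpoly :=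
  hprod_fuel (size s1 + size s2).+1 s1 s2.

From mathcomp Require Import all_boot all_order all_algebra.
From mathcomp Require Import ring zify.
Set Implicit Arguments.
Unset Strict Implicit.
Unset Printing Implicit Defensive.

Import GRing.Theory.
Local Open Scope ring_scope.

(* Both sides X_n satisfy X_(n+1) = z_b z_a^n + z_a X_n and X_0 = 0.  For the
   right side this is splitting off the term starting with z_b.  For the left
   side, one step of the recursive definition of *_t on z_(b+ia) * z_a^(n-i)
   leaves z_a times the n-th left side, plus the words z_(b+ia) z_a^(n-i)
   weighted by d_(i+1) + (1-2t) d_i + (t^2-t) d_(i-1).  Since d_m solves this
   linear recurrence with d_0 = 0 and d_1 = 1, only the weight 1 at i = 0
   survives. *)

Lemma sum_nat_shift (V : nmodType) (f : nat -> V) N : f 0%N = 0 -> f N = 0 ->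
  \sum_(0 <= i < N) f i.+1 = \sum_(0 <= i < N) f i.
Proof.
by move=> f0 fN; rewrite -[LHS]add0r -[X in X + _]f0 -big_nat_recl // big_nat_recr //= fN addr0.
Qed.

Section LinearRecurrenceWeights.

Variables (R : comPzRingType) (p q : R) (c : nat -> R).
Hypotheses (c0 : c 0%N = 0) (c1 : c 1%N = 1)
  (cSS : forall i, c i.+2 + p * c i.+1 + q * c i = 0).

Lemma sum_linrec_weights (g : nat -> R) N : g N = 0 -> g N.+1 = 0 ->
  \sum_(0 <= i < N) c i.+1 * (g i + p * g i.+1 + q * g i.+2) = g 0%N.
Proof.
move=> gN gSN.
have shift1 : \sum_(0 <= i < N) c i.+1 * g i.+1 = \sum_(0 <= i < N) c i * g i.
  by rewrite (sum_nat_shift (f := fun i => c i * g i)) ?c0 ?gN ?mul0r ?mulr0.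
(* [c i.-1] vanishes at both [i = 0] and [i = 1]. *)
have shift2 : \sum_(0 <= i < N) c i.+1 * g i.+2 = \sum_(0 <= i < N) c i.-1 * g i.
  rewrite (sum_nat_shift (f := fun i => c i * g i.+1)) ?c0 ?gSN ?mul0r ?mulr0 //.
  by rewrite (sum_nat_shift (f := fun i => c i.-1 * g i)) /= ?c0 ?gN ?mul0r ?mulr0.
have coef i : c i.+1 + p * c i + q * c i.-1 = (i == 0%N)%:R.
  by case: i => [|i]; rewrite ?cSS // c0 c1 !mulr0 !addr0.
rewrite (eq_bigr (fun i => c i.+1 * g i + p * (c i.+1 * g i.+1) + q * (c i.+1 * g i.+2)));
  last by move=> i _; rewrite !mulrDr !mulrA [c _ * p]mulrC [c _ * q]mulrC.
rewrite !big_split /= -!mulr_sumr shift1 shift2 !mulr_sumr -!big_split /=.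
under eq_bigr do rewrite !mulrA -!mulrDl coef.
case: N gN gSN {shift1 shift2} => [-> //|N _ _]; first by rewrite big_geq.
by rewrite big_nat_recl // mul1r big1 ?addr0 // => i _; rewrite mul0r.
Qed.

End LinearRecurrenceWeights.

Lemma dpoly0 : dpoly 0 = 0.
Proof. by rewrite /dpoly !expr0 subrr. Qed.

Lemma dpoly1 : dpoly 1 = 1.
Proof. by rewrite /dpoly !expr1 opprB addrC subrK. Qed.

Lemma dpolySS i :
  dpoly i.+2 + (1 - 2%:R *: 'X) * dpoly i.+1 + ('X ^+ 2 - 'X) * dpoly i = 0.
Proof. rewrite /dpoly scaler_nat !exprS; ring. Qed.

Lemma lmul_wind u v : lmul u (wind v) =1 wind (u ++ v).
Proof.
move=> w; rewrite /lmul /wind; have [->|ne] := eqVneq w (u ++ v).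
  by rewrite take_size_cat // drop_size_cat // !eqxx.
case: eqP => // ht; case: eqP => // hd.
by rewrite -(cat_take_drop (size u) w) ht hd eqxx in ne.
Qed.

Lemma eq_lmul u (f g : hpoly) : f =1 g -> lmul u f =1 lmul u g.
Proof. by move=> eq_fg w; rewrite /lmul eq_fg. Qed.

Lemma lmul_sum u (I : Type) (r : seq I) (P : pred I) (F : I -> hpoly) w :
  lmul u (fun x => \sum_(i <- r | P i) F i x) w = \sum_(i <- r | P i) lmul u (F i) w.
Proof. by rewrite /lmul; case: ifP => _ //; rewrite big1. Qed.

Lemma lmul_mull u e (f : hpoly) w : lmul u (fun x => e * f x) w = e * lmul u f w.
Proof. by rewrite /lmul; case: ifP => _ //; rewrite mulr0. Qed.

Lemma cat_nseq_false_zk m k : (0 < k)%N -> nseq m false ++ zk k = zk (m + k).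
Proof. by case: k => // k _; rewrite /zk -rcons_cat -nseqD addnS. Qed.

Lemma zword_cons k s : zword (k :: s) = zk k ++ zword s.
Proof. by []. Qed.

Lemma hprod_fuel_nil f s : hprod_fuel f.+1 [::] s = wind (zword s).
Proof. by []. Qed.

Lemma hprod_fuel_cons f k s1 l s2 : hprod_fuel f.+1 (k :: s1) (l :: s2) =
  fun w => lmul (zk k) (hprod_fuel f s1 (l :: s2)) w
      + lmul (zk l) (hprod_fuel f (k :: s1) s2) w
      + (1 - 2%:R *: 'X) * lmul (zk (k + l)) (hprod_fuel f s1 s2) w
      + (if (s1 == [::]) && (s2 == [::]) then 0 else 'X ^+ 2 - 'X)
          * lmul (nseq (k + l) false) (hprod_fuel f s1 s2) w.
Proof. by []. Qed.

Section HarmonicProductWithPowers.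

Variable a : nat.
Hypothesis a_gt0 : (0 < a)%N.

Lemma hprod_zk_nseqS k j w :
  hprod [:: k] (nseq j.+1 a) w =
    wind (zword (k :: nseq j.+1 a)) w + lmul (zk a) (hprod [:: k] (nseq j a)) w
  + (1 - 2%:R *: 'X) * wind (zword ((k + a)%N :: nseq j a)) w
  + (if j is j'.+1 then ('X ^+ 2 - 'X) * wind (zword ((k + a + a)%N :: nseq j' a)) w
     else 0).
Proof.
rewrite /hprod !size_nseq hprod_fuel_cons !hprod_fuel_nil !lmul_wind.
case: j => [|j]; first by rewrite /= mul0r.
congr (_ + _ * wind _ w).
by rewrite !zword_cons catA cat_nseq_false_zk.
Qed.

Variable b : nat.

(* Set to 0 for i > n, so that [hprod_zshift] needs no case split. *)
Definition zshift n i : hpoly :=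
  if (i <= n)%N then wind (zword ((b + i * a)%N :: nseq (n - i) a)) else fun=> 0.

Lemma hprod_zshift n i w : (i < n)%N ->
  hprod [:: (b + i * a)%N] (nseq (n - i) a) w =
    zshift n i w + (1 - 2%:R *: 'X) * zshift n i.+1 w + ('X ^+ 2 - 'X) * zshift n i.+2 w
  + lmul (zk a) (hprod [:: (b + i * a)%N] (nseq (n - i.+1) a)) w.
Proof.
move=> lt_in; rewrite -(subnSK lt_in) hprod_zk_nseqS /zshift ltnW // lt_in.
rewrite (subnSK lt_in) -addnA -mulSnr -addnA -mulSnr.
case: ltnP => [lt_Sin|]; first by rewrite -(subnSK lt_Sin); ring.
by rewrite -subn_eq0 => /eqP->; ring.
Qed.

Definition dpoly_hprod_sum n : hpoly := fun w =>
  \sum_(0 <= i < n) dpoly i.+1 * hprod [:: (b + i * a)%N] (nseq (n - i.+1) a) w.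

Definition zb_insertions n : hpoly := fun w =>
  \sum_(0 <= m < n) wind (zword (nseq m a ++ b :: nseq (n - 1 - m) a)) w.

Lemma dpoly_hprod_sumS n w : dpoly_hprod_sum n.+1 w = zshift n 0 w + lmul (zk a) (dpoly_hprod_sum n) w.
Proof.
rewrite -(sum_linrec_weights dpoly0 dpoly1 dpolySS (g := zshift n ^~ w) (N := n.+1));
  try by rewrite /zshift ifF //; lia.
rewrite /dpoly_hprod_sum lmul_sum !big_nat_recr //= addrAC; congr (_ + _).
  rewrite -big_split /=; apply: eq_big_nat => i /andP[_ lt_in].
  by rewrite lmul_mull hprod_zshift // -mulrDr.
by rewrite /zshift leqnn !ifF ?subnn ?mulr0 ?addr0 //; lia.
Qed.

Lemma zb_insertionsS n w :
  zb_insertions n.+1 w = zshift n 0 w + lmul (zk a) (zb_insertions n) w.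
Proof.
rewrite /zb_insertions big_nat_recl // lmul_sum /zshift mul0n addn0 subn1 subn0.
congr (_ + _); apply: eq_bigr => m _.
by rewrite lmul_wind -zword_cons -subnDA.
Qed.

Lemma dpoly_hprod_sum_zb_insertions n : dpoly_hprod_sum n =1 zb_insertions n.
Proof.
elim: n => [|n IH] w; first by rewrite /dpoly_hprod_sum /zb_insertions !big_geq.
by rewrite dpoly_hprod_sumS zb_insertionsS (eq_lmul _ IH).
Qed.

End HarmonicProductWithPowers.

Theorem lemma4p1 (a b n : nat) (ha : (0 < a)%N) (hb : (0 < b)%N) (hn : (0 < n)%N)
  (w : word) :
  \sum_(1 <= m < n.+1)
      dpoly m * hprod [:: (b + (m - 1) * a)%N] (nseq (n - m) a) w
  = \sum_(0 <= m < n) wind (zword (nseq m a ++ b :: nseq (n - 1 - m) a)) w.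
Proof.
transitivity (dpoly_hprod_sum a b n w); last exact: dpoly_hprod_sum_zb_insertions.
by rewrite /dpoly_hprod_sum big_add1 /=; apply: eq_bigr => i _; rewrite subn1.
Qed.
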